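(* In the setting of the theorem on differential equations for the conserved quantities (with $\widetilde H_0$, $\widetilde K_0$ as defined there and $g$ associated to $f$ via $B$), the functions $\widetilde H_0(\cdot,\varepsilon)$ and $\widetilde K_0(\cdot,\varepsilon)$ are in involution with respect to both brackets $\{F,G\}_J=(\nabla F)^TJ(x)\nabla G$ and $\{F,G\}_\Pi=(\nabla F)^T\Pi(x)\nabla G$, where $\Pi(x)=J(x)-\varepsilon^2J(x)\mathcal HJ(x)\mathcal HJ(x)$: that is, $\{\widetilde H_0,\widetilde K_0\}_J=0$ and $\{\widetilde H_0,\widetilde K_0\}_\Pi=0$.
   Context: Fix an integer $n\ge 2$. Points of $\mathbb R^{2n}$ are $x=(x_1,\dots,x_{2n})^{T}$; write $u=(x_1,\dots,x_n)^T$. Let $X(u)$ be the $n\times n$ matrix with entries $X(u)_{ij}=x_{k}$ where $k\in\{1,\dots,n\}$, $k\equiv i+j-1 \pmod n$, and let $J(x)=\begin{pmatrix}0&X(u)\\-X(u)&0\end{pmatrix}$. Let $\mathcal P$ be the $n\times n$ cyclic shift matrix ($\mathcal P_{i,i+1}=1$ for $1\le i\le n-1$, $\mathcal P_{n,1}=1$, all other entries $0$) and $A=\begin{pmatrix}\mathcal P&0\\0&\mathcal P\end{pmatrix}$. An admissible Hamiltonian is a homogeneous quadratic form $H(x)=\tfrac12 x^T\mathcal H x$ with a constant symmetric matrix $\mathcal H=\nabla^2H$ satisfying $A\mathcal H=\mathcal H A^T$; its Hamiltonian vector field is $f(x)=J(x)\nabla H(x)$. Associated vector fields: let $B=\sum_{i=0}^{n-1}\alpha_iA^i$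 with $\alpha_i\in\mathbb C$ and $B^2=I$; for an admissible $H_0$ with vector field $f$, put $K_0(x)=\tfrac12 x^T B\mathcal H x$ and $g=J\nabla K_0=B^Tf$. With $\mathcal K=B\mathcal H$, define $\widetilde H_0(x,\varepsilon)=x^T\mathcal H(I-\varepsilon^2(J(x)\mathcal H)^2)^{-1}x$ and $\widetilde K_0(x,\varepsilon)=x^T\mathcal K(I-\varepsilon^2(J(x)\mathcal K)^2)^{-1}x$. *)

(* Scalars: an arbitrary numClosedFieldType C (e.g. the complex
   numbers); "real" means [\is Num.real]. *)
From HB Require Import structures.
From mathcomp Require Import all_boot all_order all_algebra.
Set Implicit Arguments. Unset Strict Implicit. Unset Printing Implicit Defensive.
Import Order.TTheory GRing.Theory Num.Theory.
Local Open Scope ring_scope.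

Section Defs.
Variables (C : numClosedFieldType) (n : nat).

(* X(u)_{ij} = x_k, k = i+j-1 mod n (1-indexed)  <=>  0-indexed k = (i+j) mod n *)
Definition ord_addmod (i j : 'I_n) : 'I_n :=
  Ordinal (ltn_pmod (i + j) (leq_ltn_trans (leq0n i) (ltn_ord i))).

Definition Xmat (x : 'cV[C]_(n + n)) : 'M[C]_n :=
  \matrix_(i < n, j < n) x (lshift n (ord_addmod i j)) 0.

Definition Jmat (x : 'cV[C]_(n + n)) : 'M[C]_(n + n) :=
  block_mx 0 (Xmat x) (- Xmat x) 0.

Definition Pshift : 'M[C]_n := \matrix_(i < n, j < n) ((j : nat) == (i.+1 %% n)%N)%:R.

Definition Amat : 'M[C]_(n + n) := block_mx Pshift 0 0 Pshift.

Definition mxpow (M : 'M[C]_(n + n)) (k : nat) : 'M[C]_(n + n) :=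
  iter k (mulmx M) 1%:M.

Definition Bmat (alpha : nat -> C) : 'M[C]_(n + n) :=
  \sum_(i < n) alpha i *: mxpow Amat i.

Definition Htilde (M : 'M[C]_(n + n)) (eps : C) (x : 'cV[C]_(n + n)) : C :=
  (x^T *m M *m invmx (1%:M - eps ^+ 2 *: ((Jmat x *m M) *m (Jmat x *m M))) *m x) 0 0.

Definition resolvent_ok (M : 'M[C]_(n + n)) (eps : C) (x : 'cV[C]_(n + n)) : bool :=
  (1%:M - eps ^+ 2 *: ((Jmat x *m M) *m (Jmat x *m M))) \in unitmx.

Definition Pimat (M : 'M[C]_(n + n)) (eps : C) (x : 'cV[C]_(n + n)) : 'M[C]_(n + n) :=
  Jmat x - eps ^+ 2 *: (Jmat x *m M *m Jmat x *m M *m Jmat x).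

Definition is_partial (F : 'cV[C]_(n + n) -> C) (x : 'cV[C]_(n + n))
    (i : 'I_(n + n)) (l : C) : Prop :=
  forall e : C, 0 < e -> exists2 d : C, 0 < d &
    forall h : C, h \is Num.real -> h != 0 -> `|h| < d ->
      `|(F (x + h *: delta_mx i 0) - F x) / h - l| < e.

Definition is_gradient (F : 'cV[C]_(n + n) -> C) (x : 'cV[C]_(n + n))
    (g : 'cV[C]_(n + n)) : Prop :=
  forall i : 'I_(n + n), is_partial F x i (g i 0).

Definition bracket (gF : 'cV[C]_(n + n)) (M : 'M[C]_(n + n)) (gG : 'cV[C]_(n + n)) : C :=
  (gF^T *m M *m gG) 0 0.

End Defs.

From HB Require Import structures.
From mathcomp Require Import all_boot all_order all_algebra.
From mathcomp Require Import ring.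
Set Implicit Arguments. Unset Strict Implicit. Unset Printing Implicit Defensive.
Import Order.TTheory GRing.Theory Num.Theory.
Local Open Scope ring_scope.

(* Since J(x) is a block Hankel matrix with cyclic index, A^T J(x) = J(x) A and
   A^T J(w) = J(A^T w); together with A H = H A^T these pass to the polynomial
   B in A: B^T J(x) = J(x) B, B H = H B^T and B^T J(w) = J(B^T w).  With B^2 = I
   this makes the matrices I - eps^2 (J(x) M)^2 for M = H and M = B H coincide and
   gives grad K~ = B grad H~.  Both J(x) and Pi(x) are antisymmetric and satisfy
   B^T P = P B, so g^T P (B g) equals its own negative and both brackets vanish.
   The gradients exist because R(x + h w) is quadratic in h: the resolvent
   identity and a submultiplicative matrix norm bound the second-order remainder
   of h |-> (x + h w)^T M R(x + h w)^-1 (x + h w). *)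

Lemma mulmx_rcongr (R : pzSemiRingType) p q q' r s (X : 'M[R]_(p, q))
    (Y : 'M[R]_(q, r)) (Z : 'M[R]_(r, s)) (Y' : 'M[R]_(q, q')) (Z' : 'M[R]_(q', s)) :
  Y *m Z = Y' *m Z' -> X *m Y *m Z = X *m Y' *m Z'.
Proof. by move=> e; rewrite -!mulmxA e. Qed.

Lemma addrACA3 (V : nmodType) (x1 x2 x3 y1 y2 y3 : V) :
  (x1 + y1) + (x2 + y2) + (x3 + y3) = (x1 + x2 + x3) + (y1 + y2 + y3).
Proof. by rewrite (addrACA x1) (addrACA (x1 + x2)). Qed.

Lemma trmx11E (R : Type) (X : 'M[R]_1) : X^T 0 0 = X 0 0.
Proof. by rewrite mxE. Qed.

Section HankelShift.
Variables (C : numClosedFieldType) (n : nat).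
Local Notation P := (Pshift C n).
Local Notation A := (Amat C n).

Lemma ordS_addmodl (i j : 'I_n) : ordS (ord_addmod i j) = ord_addmod (ordS i) j.
Proof. by apply: val_inj => /=; rewrite -addn1 modnDml modnDml addn1 addSn. Qed.

Lemma ordS_addmodr (i j : 'I_n) : ordS (ord_addmod i j) = ord_addmod i (ordS j).
Proof. by apply: val_inj => /=; rewrite -addn1 modnDml modnDmr addn1 addnS. Qed.

Lemma addmod_predr (i j : 'I_n) : ord_addmod i (ord_pred j) = ord_addmod (ord_pred i) j.
Proof. by apply: (@ordS_inj n); rewrite ordS_addmodr ordS_addmodl !ord_predK. Qed.

Lemma addmod_predl (i j : 'I_n) : ord_addmod (ord_pred i) j = ord_pred (ord_addmod i j).
Proof. by apply: (@ordS_inj n); rewrite ordS_addmodl !ord_predK. Qed.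

Lemma sum_mul_shift (f : 'I_n -> C) (j : 'I_n) :
  \sum_(k < n) f k * ((j : nat) == (k.+1 %% n)%N)%:R = f (ord_pred j).
Proof.
rewrite (bigD1 (ord_pred j)) //=.
have -> : (j : nat) == ((ord_pred j).+1 %% n)%N.
  by have /(congr1 val) /= -> := ord_predK j.
rewrite mulr1 big1 ?addr0 // => k hk.
case: eqP => [jk|]; last by rewrite mulr0.
by case/eqP: hk; rewrite (_ : j = ordS k) ?ordSK //; apply: val_inj.
Qed.

Lemma sum_shift_mul (f : 'I_n -> C) (j : 'I_n) :
  \sum_(k < n) ((j : nat) == (k.+1 %% n)%N)%:R * f k = f (ord_pred j).
Proof. by rewrite -sum_mul_shift; apply: eq_bigr => k _; rewrite mulrC. Qed.

Lemma Xmat_Pshift (x : 'cV[C]_(n + n)) : Xmat x *m P = P^T *m Xmat x.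
Proof.
apply/matrixP => i j; rewrite !mxE.
under eq_bigr => k _ do rewrite !mxE.
under [RHS]eq_bigr => k _ do rewrite !mxE.
by rewrite sum_mul_shift sum_shift_mul addmod_predr.
Qed.

Lemma XmatD (u v : 'cV[C]_(n + n)) : Xmat (u + v) = Xmat u + Xmat v.
Proof. by apply/matrixP => i j; rewrite !mxE. Qed.

Lemma XmatZ a (u : 'cV[C]_(n + n)) : Xmat (a *: u) = a *: Xmat u.
Proof. by apply/matrixP => i j; rewrite !mxE. Qed.

Lemma trmx_Xmat (u : 'cV[C]_(n + n)) : (Xmat u)^T = Xmat u.
Proof.
apply/matrixP => i j; rewrite !mxE; congr (u _ 0); congr lshift.
by apply: val_inj => /=; rewrite addnC.
Qed.

Lemma Xmat_AmatT (w : 'cV[C]_(n + n)) : Xmat (A^T *m w) = P^T *m Xmat w.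
Proof.
apply/matrixP => i j; rewrite !mxE big_split_ord /=.
rewrite [X in _ + X]big1 ?addr0; last first.
  by move=> k _; rewrite /Amat tr_block_mx block_mxEur trmx0 mxE mul0r.
under eq_bigr => k _ do rewrite /Amat tr_block_mx block_mxEul !mxE.
under [RHS]eq_bigr => k _ do rewrite !mxE.
by rewrite sum_shift_mul sum_shift_mul addmod_predl.
Qed.

Local Notation J := (@Jmat C n).

Lemma JmatD (u v : 'cV[C]_(n + n)) : J (u + v) = J u + J v.
Proof. by rewrite /Jmat XmatD add_block_mx !addr0 opprD. Qed.

Lemma JmatZ a (u : 'cV[C]_(n + n)) : J (a *: u) = a *: J u.
Proof. by rewrite /Jmat XmatZ scale_block_mx !scaler0 scalerN. Qed.

Lemma Jmat_sum (I : finType) (F : I -> 'cV[C]_(n + n)) :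
  J (\sum_i F i) = \sum_i J (F i).
Proof.
apply: (big_morph J JmatD).
by rewrite /Jmat (_ : Xmat 0 = 0) ?oppr0 ?block_mx0 //; apply/matrixP => i j; rewrite !mxE.
Qed.

Lemma trmx_Jmat (u : 'cV[C]_(n + n)) : (J u)^T = - J u.
Proof.
by rewrite /Jmat tr_block_mx !trmx0 linearN /= trmx_Xmat opp_block_mx !oppr0 opprK.
Qed.

Lemma AmatT_Jmat (x : 'cV[C]_(n + n)) : A^T *m J x = J x *m A.
Proof.
rewrite /Jmat /Amat tr_block_mx !mulmx_block !trmx0.
by rewrite !(mul0mx, mulmx0, add0r, addr0, mulNmx, mulmxN, Xmat_Pshift).
Qed.

Lemma Jmat_AmatT (w : 'cV[C]_(n + n)) : J (A^T *m w) = A^T *m J w.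
Proof.
rewrite /Jmat Xmat_AmatT {1}/Amat tr_block_mx !mulmx_block !trmx0.
by rewrite !(mul0mx, mulmx0, add0r, addr0, mulNmx, mulmxN).
Qed.

End HankelShift.

Section ShiftPolynomial.
Variables (C : numClosedFieldType) (n : nat).
Local Notation A := (Amat C n).
Local Notation J := (@Jmat C n).

Lemma mxpow_intertwine (M N X : 'M[C]_(n + n)) k :
  M *m X = X *m N -> mxpow M k *m X = X *m mxpow N k.
Proof.
move=> eMN; elim: k => [|k IH]; first by rewrite /mxpow /= mul1mx mulmx1.
by rewrite /mxpow !iterS -/(mxpow M k) -/(mxpow N k) -mulmxA IH !mulmxA eMN.
Qed.

Lemma trmx_mxpow (M : 'M[C]_(n + n)) k : (mxpow M k)^T = mxpow M^T k.
Proof.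
elim: k => [|k IH]; first by rewrite /mxpow /= trmx1.
rewrite /mxpow !iterS -/(mxpow M k) -/(mxpow M^T k) trmx_mul IH.
by rewrite (mxpow_intertwine k (erefl (M^T *m M^T))).
Qed.

Lemma trmx_Bmat (alpha : nat -> C) :
  (Bmat n alpha)^T = \sum_(i < n) alpha i *: mxpow A^T i.
Proof.
rewrite /Bmat linear_sum; apply: eq_bigr => i _.
by rewrite linearZ /= trmx_mxpow.
Qed.

Lemma sum_mxpow_intertwine (alpha : nat -> C) (M N X : 'M[C]_(n + n)) :
  M *m X = X *m N ->
  (\sum_(i < n) alpha i *: mxpow M i) *m X = X *m \sum_(i < n) alpha i *: mxpow N i.
Proof.
move=> eMN; rewrite mulmx_suml mulmx_sumr; apply: eq_bigr => i _.
by rewrite -scalemxAl -scalemxAr (mxpow_intertwine _ eMN).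
Qed.

Lemma Bmat_intertwine (alpha : nat -> C) (X : 'M[C]_(n + n)) :
  A *m X = X *m A^T -> Bmat n alpha *m X = X *m (Bmat n alpha)^T.
Proof. by rewrite trmx_Bmat; apply: sum_mxpow_intertwine. Qed.

Lemma BmatT_Jmat (alpha : nat -> C) x : (Bmat n alpha)^T *m J x = J x *m Bmat n alpha.
Proof. by rewrite trmx_Bmat; apply/sum_mxpow_intertwine/AmatT_Jmat. Qed.

Lemma Jmat_BmatT (alpha : nat -> C) w : J ((Bmat n alpha)^T *m w) = (Bmat n alpha)^T *m J w.
Proof.
have Jpow k : J (mxpow A^T k *m w) = mxpow A^T k *m J w.
  elim: k => [|k IH]; first by rewrite /mxpow /= !mul1mx.
  by rewrite /mxpow !iterS -/(mxpow A^T k) -!mulmxA Jmat_AmatT IH.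
rewrite trmx_Bmat !mulmx_suml Jmat_sum; apply: eq_bigr => i _.
by rewrite -!scalemxAl JmatZ Jpow.
Qed.

End ShiftPolynomial.

Section ResolventAlgebra.
Variables (C : numClosedFieldType) (n : nat).
Local Notation J := (@Jmat C n).
Implicit Types (M : 'M[C]_(n + n)) (x w : 'cV[C]_(n + n)).

(* [Htilde M eps x] is [(x^T *m M *m invmx (Rmat M eps x) *m x) 0 0] and
   [resolvent_ok M eps x] is [Rmat M eps x \in unitmx], both by conversion. *)
Definition Rmat M (eps : C) x : 'M[C]_(n + n) :=
  1%:M - eps ^+ 2 *: ((J x *m M) *m (J x *m M)).

Definition Rlin M (eps : C) x w : 'M[C]_(n + n) :=
  eps ^+ 2 *: ((J x *m M) *m (J w *m M) + (J w *m M) *m (J x *m M)).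

Definition Rquad M (eps : C) w : 'M[C]_(n + n) :=
  eps ^+ 2 *: ((J w *m M) *m (J w *m M)).

(* The middle term comes from d(R^-1) = - R^-1 (dR) R^-1 with dR = - Rlin. *)
Definition Htilde_deriv M (eps : C) x w : C :=
  let S := invmx (Rmat M eps x) in
  (x^T *m M *m S *m Rlin M eps x w *m S *m x + w^T *m M *m S *m x
     + x^T *m M *m S *m w) 0 0.

Definition Htilde_grad M (eps : C) x : 'cV[C]_(n + n) :=
  \col_i Htilde_deriv M eps x (delta_mx i 0).

Lemma Rmat_shift M eps x w (h : C) :
  Rmat M eps (x + h *: w) = Rmat M eps x - h *: (Rlin M eps x w + h *: Rquad M eps w).
Proof.
rewrite /Rmat /Rlin /Rquad JmatD JmatZ !(mulmxDl, mulmxDr).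
rewrite -!(scalemxAl, scalemxAr).
by apply/matrixP => i j; rewrite !mxE; ring.
Qed.

Lemma RlinDZ M eps x a u v :
  Rlin M eps x (a *: u + v) = a *: Rlin M eps x u + Rlin M eps x v.
Proof.
rewrite /Rlin JmatD JmatZ !(mulmxDl, mulmxDr) -!(scalemxAl, scalemxAr).
by rewrite !scalerDr !scalerA mulrC addrACA.
Qed.

Lemma Htilde_derivDZ M eps x a u v :
  Htilde_deriv M eps x (a *: u + v) = a * Htilde_deriv M eps x u + Htilde_deriv M eps x v.
Proof.
rewrite /Htilde_deriv RlinDZ (_ : (a *: u + v)^T = a *: u^T + v^T); last first.
  by apply/matrixP => i j; rewrite !mxE.
have lift11 (X Y : 'M[C]_1) : a * X 0 0 + Y 0 0 = (a *: X + Y) 0 0 by rewrite !mxE.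
rewrite [RHS]lift11; congr (_ 0 0).
rewrite !(mulmxDl, mulmxDr) -!(scalemxAl, scalemxAr) !scalerDr.
by rewrite addrACA3.
Qed.

Lemma Htilde_deriv_gradE M eps x w :
  Htilde_deriv M eps x w = (w^T *m Htilde_grad M eps x) 0 0.
Proof.
have D0 : Htilde_deriv M eps x 0 = 0.
  have := Htilde_derivDZ M eps x 1 0 0; rewrite scale1r addr0 mul1r => DD.
  by apply: (@addrI _ (Htilde_deriv M eps x 0)); rewrite addr0 -DD.
rewrite {1}[w]matrix_sum_delta mxE.
under eq_bigr => i _ do rewrite big_ord1.
under [RHS]eq_bigr => i _ do rewrite !mxE.
elim/big_rec2: _ => [|i y1 y2 _ IH]; first exact: D0.
by rewrite Htilde_derivDZ IH.
Qed.

Section Symmetric.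
Variables (M : 'M[C]_(n + n)) (eps : C) (x : 'cV[C]_(n + n)).
Hypothesis M_sym : M^T = M.
Hypothesis R_unit : Rmat M eps x \in unitmx.
Local Notation S := (invmx (Rmat M eps x)).

Lemma mulmx_Rmat_sym : M *m Rmat M eps x = (Rmat M eps x)^T *m M.
Proof.
rewrite /Rmat [_^T]linearD /= [(- _)^T]linearN /= [(_ *: _)^T]linearZ /= trmx1.
rewrite !trmx_mul M_sym trmx_Jmat.
rewrite !(mulmxBl, mulmxBr, mul1mx, mulmx1, mulmxN, mulNmx, opprK).
by rewrite -scalemxAl -scalemxAr !mulmxA.
Qed.

Lemma invmx_Rmat_sym : S^T *m M = M *m S.
Proof.
have ST_RT : S^T *m (Rmat M eps x)^T = 1%:M by rewrite -trmx_mul mulmxV // trmx1.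
rewrite -[S^T *m M]mulmx1 -(mulmxV R_unit) mulmxA -[S^T *m M *m _]mulmxA.
by rewrite mulmx_Rmat_sym !mulmxA ST_RT mul1mx.
Qed.

Lemma Htilde_derivE w :
  Htilde_deriv M eps x w = ((eps ^+ 2 *+ 2) *:
    (x^T *m M *m S *m ((J w *m M) *m (J x *m M)) *m S *m x)
    + w^T *m M *m S *m x + x^T *m M *m S *m w) 0 0.
Proof.
have swap : x^T *m M *m S *m ((J x *m M) *m (J w *m M)) *m S *m x =
            x^T *m M *m S *m ((J w *m M) *m (J x *m M)) *m S *m x.
  apply/matrixP => i j; rewrite !ord1 -[LHS]trmx11E; congr (_ 0 0).
  rewrite !trmx_mul !trmxK !trmx_Jmat M_sym !(mulmxN, mulNmx, opprK) !mulmxA.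
  by rewrite !(mulmx_rcongr _ invmx_Rmat_sym).
rewrite /Htilde_deriv /Rlin -scalemxAr -!scalemxAl mulmxDr !mulmxDl swap.
by rewrite -scalerMnl mulr2n scalerDr.
Qed.

End Symmetric.
End ResolventAlgebra.

Section BmatInvariance.
Variables (C : numClosedFieldType) (n : nat).
Variables (H : 'M[C]_(n + n)) (alpha : nat -> C) (eps : C) (x : 'cV[C]_(n + n)).
Hypothesis H_sym : H^T = H.
Hypothesis AH : Amat C n *m H = H *m (Amat C n)^T.
Hypothesis B_invol : Bmat n alpha *m Bmat n alpha = 1%:M.
Hypothesis R_unit : Rmat H eps x \in unitmx.
Local Notation B := (Bmat n alpha).
Local Notation J := (@Jmat C n).
Local Notation S := (invmx (Rmat H eps x)).

Lemma mulmxBH p (X : 'M[C]_(p, n + n)) : X *m B *m H = X *m H *m B^T.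
Proof. exact/mulmx_rcongr/Bmat_intertwine. Qed.

Lemma mulmxBTJ p y (X : 'M[C]_(p, n + n)) : X *m B^T *m J y = X *m J y *m B.
Proof. exact/mulmx_rcongr/BmatT_Jmat. Qed.

Lemma mulmxBT_Jmat p w (X : 'M[C]_(p, n + n)) : X *m B^T *m J w = X *m J (B^T *m w).
Proof. by rewrite -!mulmxA Jmat_BmatT. Qed.

Lemma mulmxBTBT p (X : 'M[C]_(p, n + n)) : X *m B^T *m B^T = X.
Proof. by rewrite -mulmxA -trmx_mul B_invol trmx1 mulmx1. Qed.

Lemma Rmat_BmatH : Rmat (B *m H) eps x = Rmat H eps x.
Proof.
by rewrite /Rmat !mulmxA !mulmxBH !mulmxBTJ !mulmxBH !mulmxBTBT.
Qed.

Lemma mulmxBT_invRmat p (X : 'M[C]_(p, n + n)) : X *m B^T *m S = X *m S *m B^T.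
Proof.
apply: mulmx_rcongr.
have BT_R : B^T *m Rmat H eps x = Rmat H eps x *m B^T.
  rewrite /Rmat mulmxBl mulmxBr mul1mx mulmx1 -scalemxAl -scalemxAr.
  by rewrite -[in LHS](mul1mx B^T) !mulmxA mulmxBTJ mulmxBH mulmxBTJ mulmxBH !mul1mx.
rewrite -[B^T *m S]mul1mx -(mulVmx R_unit) -mulmxA (mulmxA _ B^T) -BT_R.
by rewrite -(mulmxA B^T) mulmxV // mulmx1.
Qed.

Lemma Htilde_deriv_BmatH w :
  Htilde_deriv (B *m H) eps x w = Htilde_deriv H eps x (B^T *m w).
Proof.
have BH_sym : (B *m H)^T = B *m H by rewrite trmx_mul H_sym -Bmat_intertwine.
have R'_unit : Rmat (B *m H) eps x \in unitmx by rewrite Rmat_BmatH.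
rewrite (Htilde_derivE BH_sym R'_unit) (Htilde_derivE H_sym R_unit) Rmat_BmatH.
rewrite trmx_mul trmxK !mulmxA !mulmxBH -!mulmxBT_Jmat !mulmxBT_invRmat.
by rewrite mulmxBTJ mulmxBH mulmxBT_invRmat mulmxBTBT.
Qed.

Lemma Htilde_grad_BmatH : Htilde_grad (B *m H) eps x = B *m Htilde_grad H eps x.
Proof.
apply/matrixP => i j; rewrite (ord1 j) [LHS]mxE Htilde_deriv_BmatH Htilde_deriv_gradE.
by rewrite trmx_mul trmxK trmx_delta -mulmxA -rowE mxE.
Qed.

Lemma trmx_Pimat : (Pimat H eps x)^T = - Pimat H eps x.
Proof.
rewrite /Pimat [_^T]linearD /= [(- _)^T]linearN /= [(_ *: _)^T]linearZ /=.
by rewrite !trmx_mul H_sym trmx_Jmat !(mulmxN, mulNmx, opprK) !mulmxA scalerN opprD opprK.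
Qed.

Lemma BmatT_Pimat : B^T *m Pimat H eps x = Pimat H eps x *m B.
Proof.
rewrite /Pimat mulmxBl mulmxBr -scalemxAl -scalemxAr BmatT_Jmat; congr (_ - _ *: _).
by rewrite -[LHS]mul1mx !mulmxA mulmxBTJ mulmxBH mulmxBTJ mulmxBH mulmxBTJ mul1mx.
Qed.

End BmatInvariance.

Lemma bracket_intertwine_eq0 (C : numClosedFieldType) n (B P : 'M[C]_(n + n))
    (g : 'cV[C]_(n + n)) :
  P^T = - P -> B^T *m P = P *m B -> bracket g P (B *m g) = 0.
Proof.
move=> P_anti BP; apply/eqP; rewrite -[_ == 0](mulrn_eq0 _ 2) mulr2n.
rewrite /bracket -{1}trmx11E !trmx_mul trmxK P_anti mulNmx mulmxN mxE.
by rewrite !mulmxA -(mulmxA _ B^T) BP !mulmxA addNr.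
Qed.

Section MatrixNorm.
Variable C : numFieldType.

Definition mxnorm p q (X : 'M[C]_(p, q)) : C := \sum_i \sum_j `|X i j|.

Lemma mxnorm_ge0 p q (X : 'M[C]_(p, q)) : 0 <= mxnorm X.
Proof. by apply: sumr_ge0 => i _; apply: sumr_ge0. Qed.

Lemma ler_entry_mxnorm p q (X : 'M[C]_(p, q)) i j : `|X i j| <= mxnorm X.
Proof.
rewrite /mxnorm (bigD1 i) //= (bigD1 j) //= -addrA lerDl.
by apply: addr_ge0; apply: sumr_ge0 => // k _; apply: sumr_ge0.
Qed.

Lemma ler_mxnormD p q (X Y : 'M[C]_(p, q)) : mxnorm (X + Y) <= mxnorm X + mxnorm Y.
Proof.
rewrite /mxnorm -big_split /=; apply: ler_sum => i _.
by rewrite -big_split /=; apply: ler_sum => j _; rewrite mxE ler_normD.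
Qed.

Lemma mxnormZ p q a (X : 'M[C]_(p, q)) : mxnorm (a *: X) = `|a| * mxnorm X.
Proof.
rewrite /mxnorm mulr_sumr; apply: eq_bigr => i _; rewrite mulr_sumr.
by apply: eq_bigr => j _; rewrite mxE normrM.
Qed.

Lemma ler_mxnormM p q r (X : 'M[C]_(p, q)) (Y : 'M[C]_(q, r)) :
  mxnorm (X *m Y) <= mxnorm X * mxnorm Y.
Proof.
rewrite /mxnorm mulr_suml; apply: ler_sum => i _.
apply: (@le_trans _ _ (\sum_j \sum_k `|X i k| * `|Y k j|)).
  apply: ler_sum => j _; rewrite mxE.
  by apply: le_trans (ler_norm_sum _ _ _) _; apply: ler_sum => k _; rewrite normrM.
rewrite exchange_big /= mulr_suml; apply: ler_sum => k _.
rewrite -mulr_sumr ler_wpM2l // (bigD1 k) //= lerDl.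
by apply: sumr_ge0 => l _; apply: sumr_ge0.
Qed.

Lemma le_mxnormD p q (X Y : 'M[C]_(p, q)) a b :
  mxnorm X <= a -> mxnorm Y <= b -> mxnorm (X + Y) <= a + b.
Proof. by move=> Xa Yb; apply: le_trans (ler_mxnormD _ _) (lerD Xa Yb). Qed.

Lemma le_mxnormM p q r (X : 'M[C]_(p, q)) (Y : 'M[C]_(q, r)) a b :
  mxnorm X <= a -> mxnorm Y <= b -> mxnorm (X *m Y) <= a * b.
Proof. by move=> Xa Yb; apply: le_trans (ler_mxnormM _ _) _; rewrite ler_pM ?mxnorm_ge0. Qed.

Lemma mxnorm_gt0 p q (X : 'M[C]_(p, q)) : X != 0 -> 0 < mxnorm X.
Proof.
move=> X0; case: (pickP (fun ij : 'I_p * 'I_q => X ij.1 ij.2 != 0)) => [[i j] Xij|X_eq0].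
  by apply: lt_le_trans (ler_entry_mxnorm X i j); rewrite normr_gt0.
by case/eqP: X0; apply/matrixP => i j; rewrite mxE; apply/eqP/negbFE/(X_eq0 (i, j)).
Qed.

Lemma unitmx_1B m (N : 'M[C]_m) : mxnorm N < 1 -> 1%:M - N \in unitmx.
Proof.
move=> N_lt1; rewrite unitmxE unitfE; apply/negP => /det0P [v v0 vN].
have v_fix : v = v *m N.
  by apply/eqP; rewrite -subr_eq0 -{1}(mulmx1 v) -mulmxBr vN.
have : mxnorm v <= mxnorm v * mxnorm N by rewrite {1}v_fix ler_mxnormM.
rewrite -{1}(mulr1 (mxnorm v)) ler_pM2l ?mxnorm_gt0 // => N_ge1.
by have := le_lt_trans N_ge1 N_lt1; rewrite ltxx.
Qed.

Lemma exists_pos_le2 (d1 d2 : C) :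
  0 < d1 -> 0 < d2 -> exists2 d : C, 0 < d & d <= d1 /\ d <= d2.
Proof.
move=> d1_gt0 d2_gt0.
by case/orP: (real_leVge (gtr0_real d1_gt0) (gtr0_real d2_gt0)) => ?; [exists d1 | exists d2].
Qed.

End MatrixNorm.

Lemma quadform_resolvent_expansion (C : comPzRingType) m (M S Sh Q1 Q2 : 'M[C]_m)
    (x w : 'cV[C]_m) (h : C) :
  Sh = S + h *: (Sh *m (Q1 + h *: Q2) *m S) ->
  (x + h *: w)^T *m M *m Sh *m (x + h *: w) =
  x^T *m M *m S *m x
  + h *: (x^T *m M *m S *m Q1 *m S *m x + w^T *m M *m S *m x + x^T *m M *m S *m w)
  + (h * h) *: (x^T *m M *m (Sh *m Q2 + (Sh *m (Q1 + h *: Q2) *m S) *m Q1) *m S *m x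
  + w^T *m M *m (Sh *m (Q1 + h *: Q2) *m S) *m x + x^T *m M *m (Sh *m (Q1 + h *: Q2) *m S) *m w
  + w^T *m M *m Sh *m w).
Proof.
move=> Sh_eq.
set Z := Sh *m (Q1 + h *: Q2) *m S in Sh_eq *.
have Z_eq : Z = (S + h *: Z) *m (Q1 + h *: Q2) *m S by rewrite {1}/Z {1}Sh_eq.
clearbody Z; subst Sh.
have xZx : x^T *m M *m Z *m x = x^T *m M *m ((S + h *: Z) *m (Q1 + h *: Q2) *m S) *m x.
  by rewrite -Z_eq.
have trD : (x + h *: w)^T = x^T + h *: w^T by apply/matrixP => i j; rewrite !mxE.
rewrite !(mulmxDl, mulmxDr) in xZx.
repeat (rewrite -scalemxAl in xZx || rewrite -scalemxAr in xZx || rewrite mulmxA in xZx).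
rewrite trD !(mulmxDl, mulmxDr).
repeat (rewrite -scalemxAl || rewrite -scalemxAr || rewrite mulmxA).
rewrite xZx.
move: (x^T *m M *m S *m x) (w^T *m M *m S *m x) (x^T *m M *m S *m Q1 *m S *m x)
  (x^T *m M *m S *m Q2 *m S *m x) (x^T *m M *m Z *m Q1 *m S *m x)
  (x^T *m M *m Z *m Q2 *m S *m x) (w^T *m M *m Z *m x) (x^T *m M *m S *m w)
  (w^T *m M *m S *m w) (x^T *m M *m Z *m w) (w^T *m M *m Z *m w).
move=> a1 a2 a3 a4 a5 a6 a7 a8 a9 a10 a11.
by apply/matrixP => i j; rewrite !mxE; ring.
Qed.

Section QuadraticResolvent.
Variables (C : numFieldType) (m : nat) (M R0 Q1 Q2 : 'M[C]_m) (R : C -> 'M[C]_m).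
Variables (x w : 'cV[C]_m).
Hypothesis R_shift : forall h, R h = R0 - h *: (Q1 + h *: Q2).
Hypothesis R0_unit : R0 \in unitmx.
Implicit Types h : C.

Let S := invmx R0.
Let Sh h := invmx (R h).
Let Qh h := Q1 + h *: Q2.
Let q := mxnorm Q1 + mxnorm Q2.
Let d0 := (2 * (mxnorm S * q + 1))^-1.

Let q_ge0 : 0 <= q.
Proof. by rewrite addr_ge0 // mxnorm_ge0. Qed.

Let c_gt0 : 0 < mxnorm S * q + 1.
Proof. by rewrite ltr_pwDr // mulr_ge0 // mxnorm_ge0. Qed.

Let mxnorm_Qh_le h : `|h| <= 1 -> mxnorm (Qh h) <= q.
Proof.
move=> h_le1; apply: le_trans (ler_mxnormD _ _) _; rewrite lerD2l mxnormZ.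
by rewrite -[leRHS]mul1r ler_wpM2r // mxnorm_ge0.
Qed.

Let d0_gt0 : 0 < d0.
Proof. by rewrite invr_gt0 mulr_gt0. Qed.

Let d0_small h : `|h| < d0 -> `|h| * (mxnorm S * q + 1) < 2^-1 /\ `|h| <= 1.
Proof.
move=> h_lt.
have small : `|h| * (mxnorm S * q + 1) < 2^-1.
  apply: lt_le_trans (_ : d0 * (mxnorm S * q + 1) <= 2^-1); first by rewrite ltr_pM2r.
  by rewrite /d0 invfM -mulrA mulVf ?mulr1 // gt_eqF.
split=> //; apply: le_trans (_ : 2^-1 <= 1); last by rewrite invf_le1 // ler1n.
apply: ltW; apply: le_lt_trans small.
by rewrite -[leLHS]mulr1 ler_wpM2l // lerDr mulr_ge0 // mxnorm_ge0.
Qed.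

Lemma resolvent_identity h : R h \in unitmx -> Sh h = S + h *: (Sh h *m Qh h *m S).
Proof.
move=> Rh_unit.
have : Sh h *m (R0 - R h) *m S = Sh h - S.
  by rewrite mulmxBr mulmxBl -(mulmxA (Sh h)) mulmxV // mulmx1 mulVmx // mul1mx.
rewrite R_shift opprB addrC subrK -scalemxAr -scalemxAl => ->.
by rewrite addrC subrK.
Qed.

Lemma resolvent_near h : `|h| < d0 -> R h \in unitmx /\ mxnorm (Sh h) <= 2 * mxnorm S.
Proof.
move=> h_lt; have [small h_le1] := d0_small h_lt.
have Qh_le := mxnorm_Qh_le h_le1.
have N_le : mxnorm (h *: (S *m Qh h)) <= 2^-1.
  rewrite mxnormZ; apply: ltW; apply: le_lt_trans small; rewrite ler_wpM2l //.
  apply: le_trans (ler_mxnormM _ _) _; apply: le_trans (_ : mxnorm S * q <= _).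
    by rewrite ler_wpM2l // mxnorm_ge0.
  by rewrite lerDl.
have Rh_unit : R h \in unitmx.
  have -> : R h = R0 *m (1%:M - h *: (S *m Qh h)).
    by rewrite R_shift mulmxBr mulmx1 -scalemxAr mulmxA mulmxV // mul1mx.
  rewrite unitmx_mul R0_unit unitmx_1B //; apply: le_lt_trans N_le _.
  by rewrite invf_lt1 // ltr1n.
split=> //.
(* |h| |S| q <= 1/2, so the resolvent identity gives |Sh| <= |S| + |Sh| / 2. *)
have Sh_le : mxnorm (Sh h) <= mxnorm S + `|h| * (mxnorm (Sh h) * (q * mxnorm S)).
  rewrite {1}(resolvent_identity Rh_unit).
  apply: le_trans (ler_mxnormD _ _) _; rewrite lerD2l mxnormZ ler_wpM2l //.
  apply: le_trans (ler_mxnormM _ _) _; rewrite mulrA ler_wpM2r ?mxnorm_ge0 //.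
  by apply: le_trans (ler_mxnormM _ _) _; rewrite ler_wpM2l ?mxnorm_ge0.
have half : `|h| * (mxnorm (Sh h) * (q * mxnorm S)) <= mxnorm (Sh h) / 2.
  rewrite mulrCA ler_wpM2l ?mxnorm_ge0 //; apply: ltW; apply: le_lt_trans small.
  by rewrite ler_wpM2l // mulrC lerDl.
have := le_trans Sh_le (lerD (lexx _) half).
by rewrite -lerBlDr {1}(splitr (mxnorm (Sh h))) addrK ler_pdivrMr // mulrC.
Qed.

Let L := x^T *m M *m S *m Q1 *m S *m x + w^T *m M *m S *m x + x^T *m M *m S *m w.
Let E h := x^T *m M *m (Sh h *m Q2 + (Sh h *m Qh h *m S) *m Q1) *m S *m x
  + w^T *m M *m (Sh h *m Qh h *m S) *m x + x^T *m M *m (Sh h *m Qh h *m S) *m w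
  + w^T *m M *m Sh h *m w.

Let remainder_bounded : exists K, forall h, `|h| < d0 -> mxnorm (E h) <= K.
Proof.
eexists => h h_lt; have [_ Sh_le] := resolvent_near h_lt.
have Qh_le := mxnorm_Qh_le (d0_small h_lt).2.
rewrite /E; repeat first
  [exact: Sh_le | exact: Qh_le | apply: le_mxnormD | apply: le_mxnormM | exact: lexx].
Qed.

Lemma quadform_resolvent_deriv (e : C) : 0 < e -> exists2 d : C, 0 < d &
  forall h, h != 0 -> `|h| < d ->
    `|(((x + h *: w)^T *m M *m invmx (R h) *m (x + h *: w)) 0 0
        - (x^T *m M *m S *m x) 0 0) / h - L 0 0| < e.
Proof.
move=> e_gt0; have [K E_le] := remainder_bounded.
have K_ge0 : 0 <= K by apply: le_trans (mxnorm_ge0 _) (E_le 0 _); rewrite normr0 d0_gt0.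
have K1_gt0 : 0 < K + 1 by rewrite ltr_pwDr.
have [d d_gt0 [d_le0 d_le1]] := exists_pos_le2 d0_gt0 (divr_gt0 e_gt0 K1_gt0).
exists d => // h h_neq0 h_lt.
have h_lt0 := lt_le_trans h_lt d_le0.
have [Rh_unit _] := resolvent_near h_lt0.
have entryDZ (A B D : 'M[C]_1) (a b : C) :
    (A + a *: B + b *: D) 0 0 = A 0 0 + a * B 0 0 + b * D 0 0.
  by rewrite !mxE.
rewrite (quadform_resolvent_expansion M x w (resolvent_identity Rh_unit)) entryDZ.
have -> : forall a l r : C, (a + h * l + h * h * r - a) / h - l = h * r.
  by move=> a l r; field.
rewrite normrM; apply: le_lt_trans (_ : `|h| * (K + 1) < e); last first.
  by rewrite -ltr_pdivlMr //; apply: lt_le_trans d_le1.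
rewrite ler_wpM2l //; apply: le_trans (ler_entry_mxnorm _ 0 0) _.
by apply: le_trans (E_le _ h_lt0) _; rewrite lerDl.
Qed.

End QuadraticResolvent.

Section Gradient.
Variables (C : numClosedFieldType) (n : nat).

Lemma is_partial_unique (F : 'cV[C]_(n + n) -> C) x i l1 l2 :
  is_partial F x i l1 -> is_partial F x i l2 -> l1 = l2.
Proof.
move=> F_l1 F_l2; apply/eqP; apply: contraT => l12.
have e_gt0 : 0 < `|l1 - l2| / 2 by rewrite divr_gt0 // normr_gt0 subr_eq0.
have [d1 d1_gt0 near1] := F_l1 _ e_gt0; have [d2 d2_gt0 near2] := F_l2 _ e_gt0.
have [d d_gt0 [d_le1 d_le2]] := exists_pos_le2 d1_gt0 d2_gt0.
have h_gt0 : 0 < d / 2 by rewrite divr_gt0.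
have h_lt : `|d / 2| < d by rewrite gtr0_norm // ltr_pdivrMr // mulr_natr mulr2n ltrDr.
have h_real : d / 2 \is Num.real by exact: gtr0_real.
have h_neq0 : d / 2 != 0 by rewrite gt_eqF.
set q := (F (x + d / 2 *: delta_mx i 0) - F x) / (d / 2) in near1 near2.
have tri : `|l1 - l2| <= `|q - l1| + `|q - l2|.
  by rewrite -(normrN (q - l1)) (le_trans _ (ler_normD _ _)) // opprB addrA subrK.
have := le_lt_trans tri (ltrD (near1 _ h_real h_neq0 (lt_le_trans h_lt d_le1))
                              (near2 _ h_real h_neq0 (lt_le_trans h_lt d_le2))).
by rewrite -splitr ltxx.
Qed.

Lemma is_gradient_unique (F : 'cV[C]_(n + n) -> C) x g1 g2 :
  is_gradient F x g1 -> is_gradient F x g2 -> g1 = g2.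
Proof.
move=> F_g1 F_g2; apply/matrixP => i j; rewrite (ord1 j).
exact: is_partial_unique (F_g1 i) (F_g2 i).
Qed.

Lemma Htilde_is_gradient (M : 'M[C]_(n + n)) (eps : C) (x : 'cV[C]_(n + n)) :
  resolvent_ok M eps x -> is_gradient (Htilde M eps) x (Htilde_grad M eps x).
Proof.
move=> R_unit i; rewrite mxE => e e_gt0.
have [d d_gt0 near] := quadform_resolvent_deriv M x (delta_mx i 0)
  (R := fun h => Rmat M eps (x + h *: delta_mx i 0)) (Rmat_shift M eps x _) R_unit e_gt0.
by exists d => // h _; apply: near.
Qed.

End Gradient.

Theorem mainTheorem5 (C : numClosedFieldType) (n : nat) (hn : (2 <= n)%N)
    (H : 'M[C]_(n + n)) (alpha : nat -> C) (eps : C) (x : 'cV[C]_(n + n)) :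
  (forall i j, H i j \is Num.real) ->
  H^T = H ->
  Amat C n *m H = H *m (Amat C n)^T ->
  Bmat n alpha *m Bmat n alpha = 1%:M ->
  eps \is Num.real ->
  (forall i, x i 0 \is Num.real) ->
  resolvent_ok H eps x ->
  resolvent_ok (Bmat n alpha *m H) eps x ->
  let Ht := Htilde H eps in
  let Kt := Htilde (Bmat n alpha *m H) eps in
  (exists gH gK, is_gradient Ht x gH /\ is_gradient Kt x gK) /\
  (forall gH gK, is_gradient Ht x gH -> is_gradient Kt x gK ->
     bracket gH (Jmat x) gK = 0 /\ bracket gH (Pimat H eps x) gK = 0).
Proof.
move=> _ H_sym AH B_invol _ _ R_unit RB_unit Ht Kt.
have gradH := Htilde_is_gradient R_unit.
have gradK := Htilde_is_gradient RB_unit.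
split; first by do 2 eexists; split; [exact: gradH | exact: gradK].
move=> gH gK /(is_gradient_unique gradH) <- /(is_gradient_unique gradK) <-.
rewrite Htilde_grad_BmatH //.
split; apply: bracket_intertwine_eq0.
- exact: trmx_Jmat.
- exact: BmatT_Jmat.
- exact: trmx_Pimat.
- exact: BmatT_Pimat.
Qed.
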